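(* Let $F:\mathbb{Z}\to\mathbb{C}$ be any function and $n\in\mathbb{Z}$. For $m=1,2,3,\dots$ define $$J_m(n,F):=\sum_{i\in\mathbb{Z}}F(i)F(i+n)F(i+2n)\cdots F\big(i+n(m-1)\big)\,:\psi_i\psi^\dagger_{i+nm}:.$$ Then $[J_m(n,F),J_{m'}(n,F)]=0$ for all $m,m'\ge1$.
   Context: Let $\psi_i,\psi^\dagger_i$ ($i\in\mathbb{Z}$) be charged free fermions, i.e. operators on the fermionic Fock space $\mathcal{F}$ satisfying $[\psi_i,\psi_j]_+=[\psi^\dagger_i,\psi^\dagger_j]_+=0$ and $[\psi_i,\psi^\dagger_j]_+=\delta_{ij}$. The space $\mathcal{F}$ is spanned by the vectors obtained from the vacuum $|0\rangle$ by applying finitely many $\psi_i,\psi^\dagger_i$; the vacuum satisfies $\psi^\dagger_i|0\rangle=0$ and $\psi_{-i-1}|0\rangle=0$ for $i\ge0$, and the dual vacuum satisfies $\langle0|\psi_i=0$, $\langle0|\psi^\dagger_{-i-1}=0$ for $i\ge0$, $\langle0|0\rangle=1$. Normal ordering: $:\psi_i\psi^\dagger_j:=\psi_i\psi^\dagger_j-\langle0|\psi_i\psi^\dagger_j|0\rangle$. The infinite sums act on each vector of $\mathcal F$ through finitely many nonzero terms. *)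

From HB Require Import structures.
From mathcomp Require Import all_boot all_order all_algebra.
From mathcomp Require Import finmap.
From mathcomp Require Import complex.
From mathcomp Require Import boolp classical_sets fsbigop.
From mathcomp Require Import Rstruct.

Set Implicit Arguments.
Unset Strict Implicit.
Unset Printing Implicit Defensive.
Import Order.TTheory GRing.Theory Num.Theory.

Local Open Scope fset_scope.
Local Open Scope ring_scope.

Definition C : Type := complex Rdefinitions.R.

(** A basis vector |S> of the Fock space is
    indexed by a subset S of Z with S (symmetric difference) Z_{<0} finite.
    We encode S by the finite set D = S (symmetric difference) Z_{<0}; this is a
    bijection between such S and finite sets of integers.  The vacuum |0>
    corresponds to S = Z_{<0}, i.e. D = fset0. *)
Definition state := {fset int}.

Definition occ (D : state) (j : int) : bool := (j < 0) != (j \in D).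

Definition toggle (D : state) (j : int) : state :=
  if j \in D then D `\ j else j |` D.

(** nabove D i = #{ j in S | j > i }.  Every occupied j > i is either a
    nonnegative element of D or a negative integer in (i, 0), which lies in
    [-|i|, -1]; so counting over this finite list is exact. *)
Definition nabove (D : state) (i : int) : nat :=
  count (fun j => (i < j) && occ D j)
        (undup (enum_fset D ++ [seq - (k.+1)%:Z | k <- iota 0 `|i|%N])).

Definition vec := state -> C.

Definition in_fock (v : vec) : Prop :=
  exists s : seq state, forall S, v S != 0 -> S \in s.

Definition vac : vec := fun S => if S == fset0 then 1 else 0.
Definition bra0 (w : vec) : C := w fset0.

(** Fermions (Jordan-Wigner signs):
      psi_i  |S> = (-1)^#{j in S, j > i} |S u {i}>   if i notin S, else 0;
      psid_i |S> = (-1)^#{j in S, j > i} |S \ {i}>   if i in S,    else 0;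
    written here as their action on coefficient functions, extended
    linearly. *)
Definition psi (i : int) (v : vec) : vec := fun T =>
  if occ T i then (-1) ^+ nabove (toggle T i) i * v (toggle T i) else 0.

Definition psid (i : int) (v : vec) : vec := fun T =>
  if ~~ occ T i then (-1) ^+ nabove (toggle T i) i * v (toggle T i) else 0.

Definition nord (i j : int) (v : vec) : vec := fun T =>
  psi i (psid j v) T - bra0 (psi i (psid j vac)) * v T.

(** J_m(n,F) = sum_{i in Z} F(i)F(i+n)...F(i+n(m-1)) :psi_i psid_{i+nm}:,
    the infinite sum being taken componentwise as a finitely supported sum
    (fsbigop: sum over the finite support, which is finite here). *)
Definition Jop (n : int) (F : int -> C) (m : nat) (v : vec) : vec := fun T =>
  \sum_(i \in [set: int])
     (\prod_(k < m) F (i + n * k%:Z)) * nord i (i + n * m%:Z) v T.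

From HB Require Import structures.
From mathcomp Require Import all_boot all_order all_algebra.
From mathcomp Require Import finmap complex boolp classical_sets fsbigop Rstruct.
From mathcomp Require Import functions zify ring.
Import Order.TTheory GRing.Theory Num.Theory.

Set Implicit Arguments.
Unset Strict Implicit.
Unset Printing Implicit Defensive.

Local Open Scope ring_scope.

(* On a basis state every sum involved has only finitely many nonzero terms,
   so J_m J_m' can be expanded as a double sum over a finite window of indices.
   By the canonical anticommutation relations
     [:psi_a psid_b:, :psi_c psid_d:] = delta_bc psi_a psid_d - delta_ad psi_c psid_b;
   the vacuum constants of normal ordering drop out.  Summing out the deltas,
   both resulting terms equal  sum_i c(i) psi_i psid_(i + n(m+m'))  with
   c(i) = F(i) F(i+n) ... F(i + n(m+m'-1)), because the coefficient products
   satisfy c_m(i) c_m'(i+nm) = c_(m+m')(i) = c_m(i+nm') c_m'(i); hence they cancel.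
   The only care needed is that summing a delta over the window loses no term. *)

Lemma mem_toggle (D : state) j x : (x \in toggle D j) = (x == j) (+) (x \in D).
Proof.
rewrite /toggle; case: ifP => hj.
  by rewrite in_fsetD1; case: eqP => [->|]; rewrite ?hj.
by rewrite in_fset1U; case: eqP => [->|]; rewrite ?hj.
Qed.

Lemma occ_toggle D j x : occ (toggle D j) x = (x == j) (+) occ D x.
Proof. by rewrite /occ mem_toggle; case: (x == j); case: (x < 0); case: (x \in D). Qed.

Lemma toggleK D j : toggle (toggle D j) j = D.
Proof. by apply/fsetP => x; rewrite !mem_toggle addbA addbb. Qed.

Lemma toggleC D a b : toggle (toggle D a) b = toggle (toggle D b) a.
Proof. by apply/fsetP => x; rewrite !mem_toggle addbCA. Qed.

Lemma count_uniq_cover (T : eqType) (P : pred T) s1 s2 : uniq s1 -> uniq s2 ->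
  {subset P <= s1} -> {subset P <= s2} -> count P s1 = count P s2.
Proof.
move=> u1 u2 h1 h2; rewrite -!size_filter; apply: perm_size.
apply: uniq_perm; rewrite ?filter_uniq // => x; rewrite !mem_filter.
by case Px: (P x) => //=; rewrite h1 ?h2.
Qed.

Definition negs_above (i : int) : seq int := [seq - (k.+1)%:Z | k <- iota 0 `|i|%N].

Lemma mem_negs_above (i j : int) : i < j -> j < 0 -> j \in negs_above i.
Proof. by move=> hij hj; apply/mapP; exists `|j|%N.-1; rewrite ?mem_iota /=; lia. Qed.

Lemma occ_above_mem D (i x : int) :
  (i < x) && occ D x -> x \in enum_fset D ++ negs_above i.
Proof.
case/andP=> hix; rewrite mem_cat /occ; case: (x \in D) => //=.
by case: ltP => // hx _; apply: mem_negs_above.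
Qed.

Lemma nabove_countE D i s : uniq s -> {subset [pred x | (i < x) && occ D x] <= s} ->
  nabove D i = count (fun x => (i < x) && occ D x) s.
Proof.
move=> us hs; apply: count_uniq_cover => //; first exact: undup_uniq.
by move=> x /occ_above_mem; rewrite mem_undup.
Qed.

Lemma odd_nabove_toggle D j i : odd (nabove (toggle D j) i) = (i < j) (+) odd (nabove D i).
Proof.
pose s := undup (j :: enum_fset D ++ negs_above i).
have us : uniq s := undup_uniq _.
have cover D' : (forall x, x != j -> occ D' x = occ D x) ->
    {subset [pred x | (i < x) && occ D' x] <= s}.
  move=> hD' x /andP [hix hx]; rewrite mem_undup in_cons; have [//|hxj] := eqVneq x j.
  by apply: occ_above_mem; rewrite hix -hD'.
have occ_other x : x != j -> occ (toggle D j) x = occ D x by rewrite occ_toggle => /negbTE ->.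
rewrite (nabove_countE us (cover _ occ_other)) (nabove_countE us (cover D (fun _ _ => erefl))).
have js : j \in s by rewrite mem_undup mem_head.
rewrite !(permP (perm_to_rem js)) /= occ_toggle eqxx.
rewrite (@eq_in_count _ _ (fun x => (i < x) && occ D x) (rem j s)); last first.
  by move=> x; rewrite (mem_rem_uniq _ us) inE => /andP [/occ_other ->].
by rewrite !oddD !oddb addbA; congr addb; case: (i < j); case: (occ D j).
Qed.

Definition fermion_sign (D : state) (i : int) : C := (-1) ^+ nabove D i.

Lemma fermion_sign_toggle D j i : fermion_sign (toggle D j) i = (-1) ^+ (i < j)%R * fermion_sign D i.
Proof. by rewrite /fermion_sign -signr_odd odd_nabove_toggle signr_addb signr_odd. Qed.

Lemma fermion_sign_toggle_id D i : fermion_sign (toggle D i) i = fermion_sign D i.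
Proof. by rewrite fermion_sign_toggle ltxx mul1r. Qed.

Lemma fermion_sign_sqr D i : fermion_sign D i * fermion_sign D i = 1.
Proof. by rewrite -expr2 sqrr_sign. Qed.

Definition fermion (b : bool) (i : int) (v : vec) : vec := fun T =>
  if occ T i == b then fermion_sign (toggle T i) i * v (toggle T i) else 0.

Lemma psi_fermion i : psi i = fermion true i.
Proof. by apply/funext => v; apply/funext => T; rewrite /fermion eqb_id. Qed.

Lemma psid_fermion i : psid i = fermion false i.
Proof. by apply/funext => v; apply/funext => T; rewrite /fermion eqbF_neg. Qed.

Lemma fermion_anticomm b b' a c v T :
  fermion b a (fermion b' c v) T + fermion b' c (fermion b a v) T =
  ((a == c) && (b != b'))%:R * v T.
Proof.
rewrite /fermion !occ_toggle; have [<-|hac] := eqVneq a c.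
  rewrite toggleK !fermion_sign_toggle_id.
  by case: b b' (occ T a) => [] [] [] /=;
    rewrite ?mulr0 ?addr0 ?add0r ?mulrA ?fermion_sign_sqr ?mul1r ?mul0r.
rewrite /= toggleC !fermion_sign_toggle !ltxx.
by case: ltgtP hac => // _ _; case: b b' (occ T a) (occ T c) => [] [] [] [] /=; ring.
Qed.

Lemma scaleCE (x y : C) : x *: y = x * y.
Proof. by []. Qed.

Lemma fermion_is_linear b i : linear (fermion b i).
Proof.
move=> x u w; apply/funext => T; rewrite /fermion !fctE !scaleCE.
by case: ifP => _; ring.
Qed.

HB.instance Definition _ b i :=
  GRing.isLinear.Build C vec vec *:%R (fermion b i) (fermion_is_linear b i).

Lemma fermion_anticommE b b' a c v :
  fermion b a (fermion b' c v) = ((a == c) && (b != b'))%:R *: v - fermion b' c (fermion b a v).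
Proof.
apply/funext => T; rewrite !fctE scaleCE -fermion_anticomm; ring.
Qed.

Lemma bilinear_commutator a b c d v :
  fermion true a (fermion false b (fermion true c (fermion false d v))) =
  fermion true c (fermion false d (fermion true a (fermion false b v))) +
  ((b == c)%:R *: fermion true a (fermion false d v) -
   (a == d)%:R *: fermion true c (fermion false b v)).
Proof.
have anti b1 b2 a1 a2 w := fermion_anticommE b1 b2 a1 a2 w.
rewrite [in LHS](anti false true b c) linearB linearZ /= (anti true true a c).
rewrite (anti false false b d) !linearB !linearZ /= (anti true false a d (fermion false b v)).
rewrite !linearB !linearZ /=; apply/funext => T; rewrite !fctE !scaleCE !andbF !andbT /=; ring.
Qed.

Definition hop (T : state) (i j : int) : C :=
  if occ T i && ~~ occ (toggle T i) j
  then fermion_sign (toggle T i) i * fermion_sign (toggle (toggle T i) j) j else 0.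

Lemma fermion_pairE i j w T :
  fermion true i (fermion false j w) T = hop T i j * w (toggle (toggle T i) j).
Proof.
rewrite /fermion /hop eqb_id eqbF_neg.
by case: (occ T i); case: (~~ _); rewrite ?mulr0 ?mul0r ?mulrA.
Qed.

Lemma hop_id T i : hop T i i = (occ T i)%:R.
Proof.
rewrite /hop occ_toggle eqxx toggleK fermion_sign_toggle_id fermion_sign_sqr.
by case: (occ T i).
Qed.

Lemma hop_neq0 T i j : hop T i j != 0 -> i != j -> occ T i && ~~ occ T j.
Proof.
move=> + hij; rewrite /hop occ_toggle [j == i]eq_sym (negbTE hij) /=.
by case: (_ && _); rewrite ?eqxx.
Qed.

Lemma vacuum_hop i j : bra0 (fermion true i (fermion false j vac)) = ((i == j) && (i < 0))%:R.
Proof.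
rewrite /bra0 fermion_pairE /vac; have [<-|hij] := eqVneq i j.
  by rewrite toggleK eqxx hop_id mulr1 /occ in_fset0; case: (i < 0).
suff /negbTE -> : toggle (toggle fset0 i) j != fset0 by rewrite mulr0.
apply/negP => /eqP/fsetP/(_ i); rewrite !mem_toggle eqxx (negbTE hij).
by rewrite in_fset0.
Qed.

Lemma nordE i j v :
  nord i j v = fermion true i (fermion false j v) - ((i == j) && (i < 0))%:R *: v.
Proof.
by apply/funext => T; rewrite /nord psi_fermion psid_fermion vacuum_hop !fctE.
Qed.

Lemma nord_pointE i j w T :
  nord i j w T = hop T i j * w (toggle (toggle T i) j) - ((i == j) && (i < 0))%:R * w T.
Proof. by rewrite nordE !fctE fermion_pairE. Qed.

Lemma nord_commutator i j i' j' v :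
  nord i j (nord i' j' v) = nord i' j' (nord i j v) +
  ((j == i')%:R *: fermion true i (fermion false j' v) -
   (i == j')%:R *: fermion true i' (fermion false j v)).
Proof.
rewrite !nordE !linearB !linearZ /= bilinear_commutator.
apply/funext => T; rewrite !fctE !scaleCE; ring.
Qed.

Definition bounded_by (T : state) (R : nat) := forall x, x \in T -> (`|x| <= R)%N.

Lemma bounded_by_exists T : exists R, bounded_by T R.
Proof.
exists (\max_(x <- enum_fset T) `|x|%N) => x xT.
exact: (@leq_bigmax_seq _ _ xpredT absz x xT).
Qed.

Lemma bounded_byW T R R' : bounded_by T R -> (R <= R')%N -> bounded_by T R'.
Proof. by move=> hT hR x /hT; lia. Qed.

Lemma bounded_by_toggle T R j : bounded_by T R -> (`|j| <= R)%N -> bounded_by (toggle T j) R.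
Proof. by move=> hT hj x; rewrite mem_toggle; case: eqVneq => [->|_ /hT]. Qed.

Lemma occ_jump T i j : occ T i -> ~~ occ T j -> [|| i \in T, j \in T | (i < 0) && (0 <= j)].
Proof. by rewrite /occ leNgt; case: (i \in T); case: (j \in T); case: (i < 0); case: (j < 0). Qed.

Lemma hop_bounds T R i k : bounded_by T R -> hop T i (i + k) != 0 -> i != i + k ->
  (`|i| <= R + `|k|)%N /\ (`|(i + k)%R| <= R + `|k|)%N.
Proof.
move=> hT /hop_neq0 hop_nz /hop_nz /andP [oi oj].
by case/or3P: (occ_jump oi oj) => [/hT|/hT|/andP [? ?]]; lia.
Qed.

Lemma bounded_by_hop T R i k : bounded_by T R -> hop T i (i + k) != 0 ->
  bounded_by (toggle (toggle T i) (i + k)) (R + `|k|).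
Proof.
move=> hT hop_nz; have [<-|ik] := eqVneq i (i + k).
  by rewrite toggleK; apply: bounded_byW hT _; lia.
have [bi bj] := hop_bounds hT hop_nz ik.
by apply: bounded_by_toggle bj; apply: bounded_by_toggle bi; apply: bounded_byW hT _; lia.
Qed.

Lemma nord_bounds T R i k w : bounded_by T R -> nord i (i + k) w T != 0 -> (`|i| <= R + `|k|)%N.
Proof.
move=> hT; rewrite nord_pointE.
have [<-|ik] := eqVneq i (i + k).
  rewrite toggleK hop_id /= -mulrBl; apply: contraNT => hi.
  have /negbTE iT : i \notin T by apply: contra hi => /hT; lia.
  by rewrite /occ iT; case: (i < 0); rewrite /= subrr mul0r.
have [->|/(hop_bounds hT)/(_ ik) [] //] := eqVneq (hop T i (i + k)) 0.
by rewrite /= !mul0r subr0 eqxx.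
Qed.

Definition window (N : nat) : seq int := [seq x%:Z - N%:Z | x <- iota 0 (N.*2).+1].

Lemma mem_window N i : (i \in window N) = (`|i| <= N)%N.
Proof.
apply/mapP/idP => [[x]|hi]; first by rewrite mem_iota => /andP [_ ?] ->; lia.
by exists `|(i + N%:Z)%R|%N; rewrite ?mem_iota; lia.
Qed.

Lemma window_uniq N : uniq (window N).
Proof. by rewrite map_inj_uniq ?iota_uniq // => x y; lia. Qed.

Lemma fsum_setT_seq (f : int -> C) r : uniq r -> (forall i, i \notin r -> f i = 0) ->
  \sum_(i \in [set: int]) f i = \sum_(i <- r) f i.
Proof.
move=> ur f0; rewrite (fsbigE r f ur) => [|//|i _ /f0 //].
by apply: eq_bigl => i; rewrite in_setT.
Qed.

Definition Jcoef (F : int -> C) (n : int) (m : nat) (i : int) : C :=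
  \prod_(k < m) F (i + n * k%:Z).

Lemma Jcoef_add F n (m m' : nat) i :
  Jcoef F n (m + m') i = Jcoef F n m i * Jcoef F n m' (i + n * m%:Z).
Proof.
rewrite /Jcoef big_split_ord; congr (_ * _); apply: eq_bigr => k _.
by rewrite /= PoszD mulrDr addrA.
Qed.

Lemma Jop_window (n : int) (F : int -> C) (m : nat) (w : vec) T R N :
  bounded_by T R -> (R + `|(n * m%:Z)%R| <= N)%N ->
  Jop n F m w T = \sum_(i <- window N) Jcoef F n m i * nord i (i + n * m%:Z) w T.
Proof.
move=> hT hN; apply: fsum_setT_seq (window_uniq N) _ => i; rewrite mem_window => iN.
have [->|/(nord_bounds hT)] := eqVneq (nord i (i + n * m%:Z) w T) 0; first by rewrite mulr0.
by lia.
Qed.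

Lemma Jop_expand (n : int) (F : int -> C) (m m' : nat) (v : vec) T R N :
  bounded_by T R -> (R + `|(n * m%:Z)%R| + `|(n * m'%:Z)%R| <= N)%N ->
  Jop n F m (Jop n F m' v) T = \sum_(i <- window N) \sum_(i' <- window N)
     Jcoef F n m i * Jcoef F n m' i' * nord i (i + n * m%:Z) (nord i' (i' + n * m'%:Z) v) T.
Proof.
move=> hT hN; rewrite (Jop_window _ _ (N := N) hT); last by lia.
apply: eq_bigr => i _; set j := i + n * m%:Z.
set T2 := toggle (toggle T i) j.
have hop_sum : hop T i j * Jop n F m' v T2 = hop T i j *
    \sum_(i' <- window N) Jcoef F n m' i' * nord i' (i' + n * m'%:Z) v T2.
  have [->|hop_nz] := eqVneq (hop T i j) 0; first by rewrite !mul0r.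
  by rewrite (Jop_window _ _ (N := N) (bounded_by_hop hT hop_nz)) //; lia.
rewrite nord_pointE -/T2 hop_sum (Jop_window _ _ (N := N) hT); last by lia.
rewrite !mulr_sumr -sumrB mulr_sumr; apply: eq_bigr => i' _.
by rewrite [in RHS]nord_pointE -/T2; ring.
Qed.

Lemma sum_seq_delta (W : seq int) x (g : int -> C) : uniq W ->
  \sum_(y <- W) (x == y)%:R * g y = (x \in W)%:R * g x.
Proof.
elim: W => [|y W IH] /=; first by rewrite big_nil mul0r.
case/andP=> yW uW; rewrite big_cons IH // in_cons.
by have [->|_] := eqVneq x y; rewrite ?(negbTE yW) /= ?mul0r ?addr0 ?add0r.
Qed.

Lemma double_sum_shift_eq0 (W : seq int) (a b : int -> C) (G : int -> int -> C) k k' :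
  uniq W -> (forall i, a i * b (i + k) = a (i + k') * b i) ->
  {in W, forall i, G i (i + k + k') != 0 -> (i + k \in W) = (i + k' \in W)} ->
  \sum_(i <- W) \sum_(i' <- W) a i * b i' *
    ((i + k == i')%:R * G i (i' + k') - (i == i' + k')%:R * G i' (i + k)) = 0.
Proof.
move=> uW ab WG.
under eq_bigr => i _ do under eq_bigr => i' _ do
  rewrite mulrBr [_ * (_ * _)]mulrCA [a i * b i' * (_ * _)]mulrCA.
under eq_bigr => i _ do rewrite sumrB.
rewrite sumrB [X in _ - X]exchange_big /= -sumrB big_seq big1 // => i iW.
rewrite sum_seq_delta //.
under eq_bigr => i' _ do rewrite eq_sym.
rewrite sum_seq_delta // [i + k' + k]addrAC -ab.
by have [->|/(WG _ iW) ->] := eqVneq (G i (i + k + k')) 0; rewrite ?mulr0 subrr.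
Qed.

Lemma Jcoef_shift F n (m m' : nat) i :
  Jcoef F n m i * Jcoef F n m' (i + n * m%:Z) = Jcoef F n m (i + n * m'%:Z) * Jcoef F n m' i.
Proof. by rewrite -Jcoef_add addnC Jcoef_add mulrC. Qed.

Lemma window_shift_mem (n : int) (m m' : nat) w T R N i :
  bounded_by T R -> (R + `|(n * m%:Z)%R| + `|(n * m'%:Z)%R| <= N)%N -> i \in window N ->
  fermion true i (fermion false (i + n * m%:Z + n * m'%:Z) w) T != 0 ->
  (i + n * m%:Z \in window N) = (i + n * m'%:Z \in window N).
Proof.
rewrite !mem_window fermion_pairE mulf_eq0 negb_or -addrA => hT hN iN /andP [hop_nz _].
(* n * m and n * m' have the same sign, so i + n * m and i + n * m' lie between
   the two ends i and i + n * (m + m') of the hop, which are in the window. *)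
have sgn : (0 <= n * m%:Z /\ 0 <= n * m'%:Z) \/ (n * m%:Z <= 0 /\ n * m'%:Z <= 0).
  by have [n_ge0|n_lt0] := lerP 0 n; [left|right]; split; nia.
suff [-> ->] : (`|(i + n * m%:Z)%R| <= N)%N /\ (`|(i + n * m'%:Z)%R| <= N)%N by [].
have [ik|ik] := eqVneq i (i + (n * m%:Z + n * m'%:Z)); first by split; lia.
by have [] := hop_bounds hT hop_nz ik; split; lia.
Qed.

Theorem mainTheorem3 (n : int) (F : int -> C) (m m' : nat) :
  (0 < m)%N -> (0 < m')%N ->
  forall v : vec, in_fock v ->
    Jop n F m (Jop n F m' v) = Jop n F m' (Jop n F m v).
Proof.
move=> _ _ v _; apply/funext => T.
have [R hT] := bounded_by_exists T.
pose N := (R + `|(n * m%:Z)%R| + `|(n * m'%:Z)%R|)%N.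
rewrite (Jop_expand _ _ hT (leqnn N)) (Jop_expand _ _ hT (_ : _ <= N)%N); last by lia.
rewrite [in RHS]exchange_big /=; apply/eqP; rewrite -subr_eq0 -sumrB; apply/eqP.
pose G x y := fermion true x (fermion false y v) T.
have commute i i' :
    Jcoef F n m i * Jcoef F n m' i' * nord i (i + n * m%:Z) (nord i' (i' + n * m'%:Z) v) T -
    Jcoef F n m' i' * Jcoef F n m i * nord i' (i' + n * m'%:Z) (nord i (i + n * m%:Z) v) T =
    Jcoef F n m i * Jcoef F n m' i' * ((i + n * m%:Z == i')%:R * G i (i' + n * m'%:Z) -
      (i == i' + n * m'%:Z)%:R * G i' (i + n * m%:Z)).
  by rewrite nord_commutator !fctE !scaleCE /G; ring.
under eq_bigr => i _ do rewrite -sumrB.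
under eq_bigr => i _ do under eq_bigr => i' _ do rewrite commute.
apply: double_sum_shift_eq0 (window_uniq N) (Jcoef_shift F n m m') _ => i iN.
exact: window_shift_mem hT (leqnn N) iN.
Qed.
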